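(* Assume the setting described in the context. Suppose that either (1) there are vectors $\lambda,\mu\in\mathbb{R}^F$ with $\mu_f\neq0$ and a constant $\theta\in(0,1)$ such that $\frac{\lambda_f}{\mu_f}\sum_{S\in\mathrm{Ind}(\Gamma(f))}\mu(S)\le\theta$ for all $f\in F$, where $\mu(S)=\prod_{g\in S}\mu_g$; or (2) $(\rho,\sim)$ satisfies Shearer's condition with vectors $p,\lambda$ and constant $\theta$, in which case $\mu(R):=q_R(p)/q_\varnothing(p)$. Then for every $R\in\mathrm{Ind}(F)$ and integer $t\ge0$, $$\sum_{\varphi\in\mathrm{Stab}(R,t)}\lambda_\varphi\le\mu(R)\,\theta^t.$$
   Context: Setting: $F$ is a finite set with a symmetric relation $\sim$ (loops $f\sim f$ allowed), and $\Gamma(f)=\{g\in F:f\sim g\}$, $\Gamma(S)=\bigcup_{f\in S}\Gamma(f)$. A set $S\subseteq F$ is independent if $f\not\sim g$ for all distinct $f,g\in S$; $\mathrm{Ind}(S)$ is the family of independent subsets of $S$. A sequence $\varphi=(I_1,\ldots,I_s)$ with $s\ge1$ is strongly stable if: (i) $I_r\in\mathrm{Ind}(F)$ for all $r$; (ii) $I_{r+1}\subseteq\Gamma(I_r)$ for $r\in[s-1]$; (iii) $I_r\neq\varnothing$ for $r\in[2,s]$. For such $\varphi$ let $R_\varphi=I_1$, $|\varphi|=\sum_r|I_r|$ and $\lambda_\varphi=\prod_r\prod_{f\in I_r}\lambda_f$. Let $\mathrm{Stab}(R,t)$ be the set of strongly stable sequences $\varphi$ with $R_\varphi=R$ and $|\varphi|\ge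 t$. Shearer's condition refers additionally to the following data: a finite set $\Omega$ in which the flaws $f\in F$ are nonempty subsets; probability distributions $\rho(\cdot\mid f,\sigma)$ with support $A(f,\sigma)$ for each $\sigma\in f$; and a distribution $\omega$ on $\Omega$ with $\omega>0$. Set $q_S(p)=\sum_{I:S\subseteq I\in\mathrm{Ind}(F)}(-1)^{|I|-|S|}\prod_{f\in I}p_f$. It requires $p\in\mathbb{R}^F$ with $q_S(p)\ge0$ for all $S\subseteq F$ and $q_\varnothing(p)>0$, a vector $\lambda$ with $\lambda_f\ge\sum_{\sigma\in f:\sigma'\in A(f,\sigma)}\rho(\sigma'\mid f,\sigma)\omega(\sigma)/\omega(\sigma')$ for all $f,\sigma'$, and $\theta\in(0,1)$ with $\lambda_f\le\theta p_f$ for all $f$. *)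

From HB Require Import structures.
From mathcomp Require Import all_boot all_order all_algebra.
From mathcomp Require Import all_classical all_reals.
From mathcomp Require Import ereal esum.
Set Implicit Arguments. Unset Strict Implicit. Unset Printing Implicit Defensive.
Import Order.TTheory GRing.Theory Num.Theory.
Local Open Scope ring_scope.

Section Defs.
Variable F : finType.
Variable sim : rel F. (* the symmetric relation ~ (loops allowed) *)

Definition symmetric_rel := forall f g : F, sim f g = sim g f.

Definition Gam (f : F) : {set F} := [set g | sim f g].
Definition GamS (S : {set F}) : {set F} := \bigcup_(f in S) Gam f.

Definition indep (S : {set F}) : bool :=
  [forall f in S, forall g in S, (f != g) ==> ~~ sim f g].

(* strongly stable sequence (I_1, ..., I_s), s >= 1, I_r = nth (@finset.set0 F) phi (r-1) *)
Definition strongly_stable (phi : seq {set F}) : Prop :=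
  [/\ (0 < size phi)%N,
      (forall r, (r < size phi)%N -> indep (nth (@finset.set0 F) phi r)),
      (forall r, (r.+1 < size phi)%N ->
          nth (@finset.set0 F) phi r.+1 \subset GamS (nth (@finset.set0 F) phi r)) &
      (forall r, (1 <= r < size phi)%N -> nth (@finset.set0 F) phi r != @finset.set0 F)].

Definition R_of (phi : seq {set F}) : {set F} := head (@finset.set0 F) phi.
Definition weight (phi : seq {set F}) : nat := sumn [seq #|J| | J : {set F} <- phi].

Definition Stab (R : {set F}) (t : nat) : set (seq {set F}) :=
  [set phi | strongly_stable phi /\ R_of phi = R /\ (t <= weight phi)%N].

Variable Rl : realType.

Definition lam_seq (lam : F -> Rl) (phi : seq {set F}) : Rl :=
  \prod_(J <- phi) \prod_(f in J) lam f.

Definition mu_prod (mu : F -> Rl) (S : {set F}) : Rl := \prod_(g in S) mu g.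

Definition q (p : F -> Rl) (S : {set F}) : Rl :=
  \sum_(J : {set F} | indep J && (S \subset J))
     (-1) ^+ (#|J| - #|S|) * \prod_(f in J) p f.

End Defs.

Definition case1 (F : finType) (sim : rel F) (Rl : realType)
    (lam mu : F -> Rl) (theta : Rl) : Prop :=
  [/\ 0 < theta < 1,
      (forall f, 0 <= lam f),
      (forall f, 0 < mu f) &
      (forall f, lam f / mu f *
         (\sum_(S : {set F} | (S \subset Gam sim f) && indep sim S) mu_prod mu S)
         <= theta)].

(* Omega : finite set; flaws are (pairwise distinct) nonempty subsets fl f of Omega;
   rho f sigma is a probability distribution on Omega for each sigma in fl f,
   with support A(f,sigma) = {sigma' | rho f sigma sigma' > 0};
   omega is a distribution on Omega with omega > 0. *)
Definition shearer (F : finType) (sim : rel F) (Rl : realType)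
    (Omega : finType) (fl : F -> {set Omega})
    (rho : F -> Omega -> Omega -> Rl) (omega : Omega -> Rl)
    (p lam : F -> Rl) (theta : Rl) : Prop :=
  [/\ injective fl /\ (forall f, fl f != @finset.set0 Omega),
      (forall f sigma, sigma \in fl f ->
         (forall s', 0 <= rho f sigma s') /\ \sum_(s' : Omega) rho f sigma s' = 1),
      (forall s, 0 < omega s) /\ \sum_(s : Omega) omega s = 1,
      (forall S : {set F}, 0 <= q sim p S) /\ 0 < q sim p (@finset.set0 F) &
      ((forall f (s' : Omega),
         \sum_(sigma in fl f | 0 < rho f sigma s')
            rho f sigma s' * omega sigma / omega s' <= lam f) /\
       (0 < theta < 1) /\ (forall f, lam f <= theta * p f))].

From HB Require Import structures.
From mathcomp Require Import all_boot all_order all_algebra.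
From mathcomp Require Import all_classical all_reals.
From mathcomp Require Import ereal esum.
(* Re-imported so that [set0], [subsetP] and [inE] refer to finite sets. *)
From mathcomp Require Import fintype finset.
Import Order.TTheory GRing.Theory Num.Theory.
Local Open Scope ring_scope.
Set Implicit Arguments. Unset Strict Implicit. Unset Printing Implicit Defensive.

(* Peeling off the first set R = I_1 of a strongly stable sequence factors out
   lambda(R) and leaves a strongly stable sequence starting at an independent
   I_2 inside Gamma(R).  By induction on the length, the theorem therefore
   follows from the cluster bound
     lambda(R) * sum_{T independent, T in Gamma(R)} mu(T) <= theta^|R| * mu(R).
   In case (1) it comes from the submultiplicativity Z(A u B) <= Z(A) Z(B) of
   the independence polynomial Z(A) = sum_{T independent, T in A} mu(T).  In
   case (2), inclusion-exclusion gives q_R = p(R) * sum_{T independent,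
   T in R u Gamma(R)} q_T for independent R, and lambda_f <= theta p_f. *)

Section Independence.
Variables (F : finType) (sim : rel F).

Lemma indepP (S : {set F}) :
  reflect (forall f g, f \in S -> g \in S -> f != g -> ~~ sim f g) (indep sim S).
Proof.
apply: (iffP forallP) => [H f g fS gS fg|H f].
  by have /implyP /(_ fS) /forallP /(_ g) /implyP /(_ gS) /implyP /(_ fg) := H f.
apply/implyP => fS; apply/forallP => g; apply/implyP => gS; apply/implyP; exact: H.
Qed.

Lemma indep_subset (S T : {set F}) : indep sim S -> T \subset S -> indep sim T.
Proof.
by move=> /indepP iS /subsetP TS; apply/indepP => f g fT gT; apply: iS; apply: TS.
Qed.

Lemma indep_set0 : indep sim set0.
Proof. by apply/indepP => f g; rewrite in_set0. Qed.

Lemma GamSP (R : {set F}) g : reflect (exists2 f, f \in R & sim f g) (g \in GamS sim R).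
Proof.
apply: (iffP bigcupP) => [[f fR]|[f fR sfg]]; first by rewrite inE => h; exists f.
by exists f => //; rewrite inE.
Qed.

Lemma indep_setU (J R : {set F}) : symmetric_rel sim -> indep sim R ->
  [disjoint J & R] ->
  indep sim (J :|: R) = indep sim J && [disjoint J & GamS sim R].
Proof.
move=> symm /indepP iR dJR; apply/idP/andP => [/indepP iJR|[/indepP iJ dJG]].
  split; first by apply/indepP => f g fJ gJ; apply: iJR; rewrite in_setU ?fJ ?gJ.
  rewrite disjoint_subset; apply/subsetP => g gJ; rewrite inE.
  apply/GamSP => -[f fR sfg].
  have fg : f != g by apply: contraTneq gJ => <-; rewrite (disjointFl dJR fR).
  by move: (iJR f g); rewrite !in_setU fR gJ orbT sfg => /(_ isT isT fg).
have notG f g : f \in J -> g \in R -> ~~ sim g f.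
  by move=> fJ gR; apply: contraL fJ => sgf; rewrite (disjointFl dJG) //; apply/GamSP; exists g.
apply/indepP => f g; rewrite !in_setU => /orP [fJ|fR] /orP [gJ|gR] fg.
- exact: iJ.
- by rewrite symm notG.
- exact: notG.
- exact: iR.
Qed.

End Independence.

Section StronglyStable.
Variables (F : finType) (sim : rel F).
Local Notation next phi := (nth set0 phi 1).

Lemma strongly_stable_behead (I : {set F}) psi :
  strongly_stable sim (I :: psi) -> (0 < size psi)%N -> strongly_stable sim psi.
Proof.
case=> _ hi hs hn hp; split=> // r hr.
- exact: (hi r.+1).
- exact: (hs r.+1).
- by case/andP: hr => _ hr; apply: (hn r.+1).
Qed.

Lemma strongly_stable_next phi : strongly_stable sim phi ->
  indep sim (next phi) && (next phi \subset GamS sim (R_of phi)).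
Proof.
case: phi => [|I [|J psi]] [//= _ hi hs _]; first by rewrite indep_set0 sub0set.
by rewrite (hi 1%N) ?(hs 0%N).
Qed.

Lemma strongly_stable_next_set0 phi :
  strongly_stable sim phi -> next phi = set0 -> phi = [:: R_of phi].
Proof.
case: phi => [|I [|J psi]] [//= _ _ _ hn] eJ.
by have := hn 1%N isT; rewrite eJ eqxx.
Qed.

End StronglyStable.

Lemma sum_uniq_pred1_le (R : numDomainType) (I : eqType) (X : seq I) (P : pred I)
    (x : I) (g : I -> R) :
  uniq X -> {in X, forall i, P i -> i = x} -> 0 <= g x ->
  \sum_(i <- X | P i) g i <= g x.
Proof.
move=> uX HX gx0; rewrite -big_filter.
have : {in [seq i <- X | P i], forall i, i = x}.
  by move=> i; rewrite mem_filter => /andP [Pi iX]; apply: HX.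
have : uniq [seq i <- X | P i] by rewrite filter_uniq.
case: [seq i <- X | P i] => [|a [|b s]] /= u ex; rewrite ?big_nil ?big_seq1 //.
  by rewrite (ex a) ?mem_head.
by move: u; rewrite (ex a) ?mem_head // (ex b) ?inE ?eqxx ?orbT.
Qed.

Section Recursion.
Variables (F : finType) (sim : rel F) (Rl : realType) (lam : F -> Rl)
  (theta : Rl) (muS : {set F} -> Rl).
Hypotheses (lam_ge0 : forall f, 0 <= lam f) (theta_ge0 : 0 <= theta)
  (theta_le1 : theta <= 1) (muS_set0 : muS set0 = 1)
  (muS_ge0 : forall T, indep sim T -> 0 <= muS T)
  (cluster_bound : forall R, indep sim R ->
     \prod_(f in R) lam f *
       \sum_(T : {set F} | indep sim T && (T \subset GamS sim R)) muS T
     <= theta ^+ #|R| * muS R).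

Local Notation next phi := (nth set0 phi 1).
Local Notation lamS R := (\prod_(f in R) lam f).

Definition stab_upto (N : nat) (R : {set F}) (t : nat) (phi : seq {set F}) :=
  [/\ strongly_stable sim phi, R_of phi = R, (t <= weight phi)%N & (size phi <= N)%N].

Definition stab_bound_upto (N : nat) := forall R t (X : seq (seq {set F})),
  indep sim R -> uniq X -> {in X, forall phi, stab_upto N R t phi} ->
  \sum_(phi <- X) lam_seq lam phi <= muS R * theta ^+ t.

Lemma lam_seq_cons (R : {set F}) psi : lam_seq lam (R :: psi) = lamS R * lam_seq lam psi.
Proof. by rewrite /lam_seq big_cons. Qed.

Lemma lamS_ge0 (R : {set F}) : 0 <= lamS R.
Proof. exact: prodr_ge0. Qed.

Lemma stab_upto_cons N R t phi : stab_upto N R t phi -> phi = R :: behead phi.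
Proof. by case: phi => [|I psi] [[]] //= _ _ _ _ ->. Qed.

Lemma stab_upto_behead N R t phi : stab_upto N.+1 R t phi -> next phi != set0 ->
  stab_upto N (next phi) (t - #|R|) (behead phi).
Proof.
move=> st; have e := stab_upto_cons st; case: st => ss _ tw sN.
rewrite e in ss tw sN *; case: (behead phi) ss tw sN => [|J psi] /= ss tw sN.
  by rewrite eqxx.
by split=> //; [exact: (strongly_stable_behead ss) | rewrite leq_subLR].
Qed.

Lemma lam_seq_ge0 phi : 0 <= lam_seq lam phi.
Proof. by apply: prodr_ge0 => J _; apply: lamS_ge0. Qed.

(* [nth set0 phi 1] is I_2, or set0 for phi = [:: R]: the length-one sequence is
   carried by the term T = set0 of the cluster bound. *)
Lemma sum_next_set0_le N R t X : uniq X -> {in X, forall phi, stab_upto N R t phi} ->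
  \sum_(phi <- X | next phi == set0) lam_seq lam phi
  <= lamS R * (muS set0 * theta ^+ (t - #|R|)).
Proof.
move=> uX HX.
have [/hasP [phi0 phi0X /eqP nphi0] | none] := boolP (has (fun phi => next phi == set0) X);
  last by rewrite [X in X <= _]big_hasC // !mulr_ge0 ?lamS_ge0 ?muS_ge0 ?indep_set0 ?exprn_ge0.
have single phi : phi \in X -> next phi = set0 -> phi = [:: R].
  by move=> /HX [ss hR _ _]; rewrite -hR; exact: strongly_stable_next_set0 ss.
rewrite muS_set0 mul1r.
have [_ _ tw _] := HX _ phi0X; rewrite (single _ phi0X nphi0) /weight /= addn0 in tw.
rewrite (eqP (_ : t - #|R| == 0)%N) ?subn_eq0 // expr0 mulr1.
have -> : lamS R = lam_seq lam [:: R] by rewrite lam_seq_cons /lam_seq big_nil mulr1.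
apply: sum_uniq_pred1_le => //; last exact: lam_seq_ge0.
by move=> phi phiX /eqP; apply: single.
Qed.

Lemma sum_next_le N R t X T : stab_bound_upto N -> indep sim T -> T != set0 ->
  uniq X -> {in X, forall phi, stab_upto N.+1 R t phi} ->
  \sum_(phi <- X | next phi == T) lam_seq lam phi
  <= lamS R * (muS T * theta ^+ (t - #|R|)).
Proof.
move=> IH iT nT uX HX.
rewrite big_seq_cond (eq_bigr (fun phi => lamS R * lam_seq lam (behead phi))); last first.
  by move=> phi /andP [phiX _]; rewrite {1}(stab_upto_cons (HX _ phiX)) lam_seq_cons.
rewrite -big_distrr ler_wpM2l ?lamS_ge0 // -big_seq_cond -big_filter.
rewrite -(big_map behead xpredT); apply: IH => //.
  rewrite map_inj_in_uniq ?filter_uniq // => a b.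
  rewrite !mem_filter => /andP [_ aX] /andP [_ bX] eab.
  by rewrite (stab_upto_cons (HX _ aX)) (stab_upto_cons (HX _ bX)) eab.
move=> psi /mapP [phi]; rewrite mem_filter => /andP [/eqP nphi phiX] ->.
by rewrite -nphi; apply: stab_upto_behead; [exact: HX | rewrite nphi].
Qed.

Lemma stab_bound_upto0 : stab_bound_upto 0.
Proof.
move=> R t X iR uX HX; rewrite big1_seq ?mulr_ge0 ?muS_ge0 ?exprn_ge0 //.
by move=> phi /HX [[s0 _ _ _] _ _]; rewrite leqn0 => /eqP s; rewrite s in s0.
Qed.

Lemma stab_bound_uptoS N : stab_bound_upto N -> stab_bound_upto N.+1.
Proof.
move=> IH R t X iR uX HX.
rewrite big_seq (partition_big (fun phi => next phi)
  (fun T => indep sim T && (T \subset GamS sim R))) /=; last first.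
  by move=> phi /HX [ss hR _ _]; rewrite -hR; apply: strongly_stable_next.
under eq_bigr do rewrite -big_seq_cond.
apply: (@le_trans _ _ (\sum_(T | indep sim T && (T \subset GamS sim R))
                         lamS R * (muS T * theta ^+ (t - #|R|)))).
  apply: ler_sum => T /andP [iT _]; have [->|nT] := eqVneq T set0.
    exact: (sum_next_set0_le uX HX).
  exact: (sum_next_le IH).
rewrite -big_distrr -big_distrl /= mulrA.
apply: (le_trans (ler_wpM2r (exprn_ge0 _ theta_ge0) (cluster_bound iR))).
rewrite mulrAC mulrC -exprD ler_wpM2l ?muS_ge0 //.
by apply: ler_wiXn2l => //; rewrite -leq_subLR.
Qed.

Lemma stab_bound N : stab_bound_upto N.
Proof. by elim: N => [|N]; [exact: stab_bound_upto0 | exact: stab_bound_uptoS]. Qed.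

Lemma esum_Stab_le R t : indep sim R ->
  (\esum_(phi in Stab sim R t) (lam_seq lam phi)%:E <= (muS R * theta ^+ t)%:E)%E.
Proof.
move=> iR; apply: ge_ereal_sup => _ [A [finA AS] <-].
rewrite fsbig_finite //= sumEFin lee_fin.
apply: (@stab_bound (\max_(phi <- finmap.enum_fset (fset_set A)) size phi) _ _ _ iR
          (finmap.fset_uniq _)).
move=> phi phiA; have Aphi : A phi by move: phiA; rewrite in_fset_set // in_setE.
have [ss [hR hw]] := AS phi Aphi.
by split => //; apply: (@leq_bigmax_seq _ _ xpredT).
Qed.

End Recursion.

Lemma ler_sum_subpred (R : numDomainType) (I : finType) (P Q : pred I) (g : I -> R) :
  (forall i, P i -> Q i) -> (forall i, Q i -> 0 <= g i) ->
  \sum_(i | P i) g i <= \sum_(i | Q i) g i.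
Proof.
move=> PQ g0; rewrite [X in _ <= X](bigID P) /=.
have -> : \sum_(i | Q i && P i) g i = \sum_(i | P i) g i.
  by apply: eq_bigl => i; case: (boolP (P i)) => Pi; rewrite ?andbT ?andbF ?PQ.
by rewrite lerDl; apply: sumr_ge0 => i /andP [Qi _]; apply: g0.
Qed.

Lemma ler_sum_inj (R : numDomainType) (I J : finType) (P : pred I) (Q : pred J)
    (h : I -> J) (g : J -> R) :
  {in P &, injective h} -> (forall i, P i -> Q (h i)) -> (forall j, Q j -> 0 <= g j) ->
  \sum_(i | P i) g (h i) <= \sum_(j | Q j) g j.
Proof.
move=> hinj PQ g0; rewrite -[X in X <= _](big_imset _ hinj) /=.
apply: ler_sum_subpred => // _ /imsetP [i Pi ->]; exact: PQ.
Qed.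

Section IndependencePolynomial.
Variables (F : finType) (sim : rel F) (Rl : realType) (mu : F -> Rl).
Hypothesis mu_ge0 : forall f, 0 <= mu f.

Definition indep_poly (A : {set F}) : Rl :=
  \sum_(T : {set F} | indep sim T && (T \subset A)) mu_prod mu T.

Lemma mu_prod_ge0 T : 0 <= mu_prod mu T.
Proof. by apply: prodr_ge0 => f _; apply: mu_ge0. Qed.

Lemma indep_poly_ge0 A : 0 <= indep_poly A.
Proof. by apply: sumr_ge0 => T _; apply: mu_prod_ge0. Qed.

Lemma indep_poly_set0 : indep_poly set0 = 1.
Proof.
rewrite /indep_poly (big_pred1 set0) ?/mu_prod ?big_set0 // => T /=.
by rewrite subset0 andbC; case: eqP => // ->; rewrite indep_set0.
Qed.

Lemma indep_poly_setU_le A B : indep_poly (A :|: B) <= indep_poly A * indep_poly B.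
Proof.
rewrite /indep_poly big_distrlr pair_big_dep /=.
rewrite (eq_bigr (fun T => mu_prod mu (T :&: A) * mu_prod mu (T :\: A))); last first.
  by move=> T _; rewrite /mu_prod (big_setID A).
apply: (@ler_sum_inj _ _ _ _ _ (fun T => (T :&: A, T :\: A))
          (fun TT => mu_prod mu TT.1 * mu_prod mu TT.2)).
- by move=> T1 T2 _ _ [e1 e2]; rewrite -(setID T1 A) -(setID T2 A) e1 e2.
- move=> T /andP [iT TAB] /=.
  rewrite (indep_subset iT (subsetIl _ _)) (indep_subset iT (subsetDl _ _)) subsetIr /=.
  by rewrite subDset.
- by move=> TT _; rewrite mulr_ge0 ?mu_prod_ge0.
Qed.

Lemma indep_poly_GamS_le R : indep_poly (GamS sim R) <= \prod_(f in R) indep_poly (Gam sim f).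
Proof.
apply: (big_rec2 (fun X y => indep_poly X <= y)); first by rewrite indep_poly_set0.
move=> f X y _ hX; apply: le_trans (indep_poly_setU_le _ _) _.
by rewrite ler_wpM2l ?indep_poly_ge0.
Qed.

End IndependencePolynomial.

Lemma product_cluster_bound (F : finType) (sim : rel F) (Rl : realType)
    (lam mu : F -> Rl) (theta : Rl) :
  (forall f, 0 <= lam f) -> (forall f, 0 < mu f) ->
  (forall f, lam f / mu f *
     (\sum_(S : {set F} | (S \subset Gam sim f) && indep sim S) mu_prod mu S) <= theta) ->
  forall R : {set F}, \prod_(f in R) lam f * indep_poly sim mu (GamS sim R)
            <= theta ^+ #|R| * mu_prod mu R.
Proof.
move=> lam_ge0 mu_gt0 hf R; have mu_ge0 f := ltW (mu_gt0 f).
have lamR_ge0 : 0 <= \prod_(f in R) lam f by apply: prodr_ge0.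
apply: (le_trans (ler_wpM2l lamR_ge0 (indep_poly_GamS_le sim mu_ge0 R))).
rewrite -big_split /= /mu_prod -prodr_const -big_split /=.
apply: ler_prod => f _; rewrite mulr_ge0 ?indep_poly_ge0 //=.
have := hf f; rewrite (eq_bigl (fun S => indep sim S && (S \subset Gam sim f))) => [|S].
  by rewrite -/(indep_poly sim mu (Gam sim f)) mulrAC ler_pdivrMr // mulrC.
by rewrite andbC.
Qed.

Lemma alternating_sum_subsets (R : numDomainType) (I : finType) (S : {set I}) :
  \sum_(T : {set I} | T \subset S) (-1 : R) ^+ #|T| = (S == set0)%:R.
Proof.
have [->|[x xS]] := set_0Vmem S.
  by rewrite eqxx (big_pred1 set0) ?cards0 // => T; rewrite subset0.
rewrite (_ : S == set0 = false); last by apply/negbTE/set0Pn; exists x.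
pose toggle (T : {set I}) := if x \in T then T :\ x else x |: T.
have toggleK : involutive toggle.
  move=> T; rewrite /toggle; case: (boolP (x \in T)) => xT.
    by rewrite setD11 setD1K.
  by rewrite setU11 setU1K.
set s := \sum_(T | _) _; suff s_opp : s = - s.
  by apply/eqP; rewrite -[s == 0]/(false || (s == 0)) -(mulrn_eq0 s 2) mulr2n {1}s_opp addNr.
rewrite {1}/s (reindex_inj (inv_inj toggleK)) /= -sumrN.
apply: eq_big => T; rewrite /toggle; case: ifP => xT.
- by rewrite -{2}(setD1K xT) subUset sub1set xS.
- by rewrite subUset sub1set xS.
- by move=> _; rewrite [in RHS](cardsD1 x T) xT exprS mulN1r opprK.
- by move=> _; rewrite cardsU1 xT exprS mulN1r.
Qed.

Section ShearerPolynomial.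
Variables (F : finType) (sim : rel F) (Rl : realType) (p : F -> Rl).
Local Notation pprod S := (\prod_(f in S) p f).

Lemma sum_q_subset (Y : {set F}) :
  \sum_(T : {set F} | indep sim T && (T \subset Y)) q sim p T =
  \sum_(J : {set F} | indep sim J && [disjoint J & Y]) (-1) ^+ #|J| * pprod J.
Proof.
rewrite /q (exchange_big_dep (fun J : {set F} => indep sim J)) /=; last first.
  by move=> T J _ /andP [].
rewrite [RHS]big_mkcondr /=; apply: eq_bigr => J iJ.
transitivity (\sum_(T : {set F} | T \subset J :&: Y)
                ((-1) ^+ #|J| * pprod J) * (-1) ^+ #|T|).
  apply: eq_big => T.
    rewrite subsetI iJ /=; case: (boolP (T \subset J)) => TJ; rewrite ?andbF ?andbT //.
    by rewrite (indep_subset iJ TJ).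
  move=> /andP [_ /andP [_ TJ]]; rewrite mulrAC; congr (_ * _).
  by rewrite -{2}(subnK (subset_leq_card TJ)) exprD -mulrA -expr2 sqrr_sign mulr1.
by rewrite -big_distrr /= alternating_sum_subsets setI_eq0; case: ifP; rewrite ?mulr1 ?mulr0.
Qed.

Lemma q_indep_factor (R : {set F}) : symmetric_rel sim -> indep sim R ->
  q sim p R = pprod R *
    \sum_(T : {set F} | indep sim T && (T \subset R :|: GamS sim R)) q sim p T.
Proof.
move=> symm iR; rewrite sum_q_subset /q big_distrr /=.
rewrite (reindex_onto (fun J => J :|: R) (fun J => J :\: R)) /=; last first.
  move=> J /andP [_ RJ]; apply/setP => f; rewrite !inE.
  by case: (boolP (f \in R)) => fR; rewrite ?orbT ?orbF ?andbT // (subsetP RJ).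
apply: eq_big => J.
  rewrite subsetUr andbT !disjoints_subset setCU subsetI -!disjoints_subset.
  case: (boolP [disjoint J & R]) => dJR /=.
    by rewrite indep_setU // setDUl setDv setU0 (setDidPl dJR) eqxx andbT.
  rewrite andbF; apply: contraNF dJR => /andP [_ /eqP <-].
  by rewrite disjoints_subset setDE subsetIr.
move=> /andP [_ /eqP eJ]; have dJR : [disjoint J & R].
  by rewrite -eJ disjoints_subset setDE subsetIr.
have -> : pprod (J :|: R) = pprod J * pprod R.
  by rewrite -bigU //; apply: eq_bigl => f; rewrite !inE.
rewrite cardsU (disjoint_setI0 dJR) cards0 subn0 addnK.
by rewrite mulrA mulrC.
Qed.
End ShearerPolynomial.

Lemma shearer_cluster_bound (F : finType) (sim : rel F) (Rl : realType)
    (p lam : F -> Rl) (theta : Rl) :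
  symmetric_rel sim -> (forall S, 0 <= q sim p S) -> (forall f, 0 <= lam f) ->
  (forall f, lam f <= theta * p f) ->
  forall R, indep sim R ->
  \prod_(f in R) lam f *
    \sum_(T : {set F} | indep sim T && (T \subset GamS sim R)) q sim p T
  <= theta ^+ #|R| * q sim p R.
Proof.
move=> symm q_ge0 lam_ge0 lam_le R iR; rewrite (q_indep_factor p symm iR) mulrA.
apply: ler_pM; [exact: prodr_ge0 | exact: sumr_ge0 | |].
  rewrite -prodr_const -big_split; apply: ler_prod => f _; exact/andP.
apply: ler_sum_subpred => [T /andP [iT TG]|T _]; last exact: q_ge0.
by rewrite iT (subset_trans TG) ?subsetUr.
Qed.

Theorem theorem7 (F : finType) (sim : rel F) (Rl : realType)
    (lam : F -> Rl) (theta : Rl) (muS : {set F} -> Rl) :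
  symmetric_rel sim ->
  ((exists mu : F -> Rl,
      case1 sim lam mu theta /\ muS = mu_prod mu) \/
   (exists (Omega : finType) (fl : F -> {set Omega})
           (rho : F -> Omega -> Omega -> Rl) (omega : Omega -> Rl) (p : F -> Rl),
      shearer sim fl rho omega p lam theta /\
      muS = (fun R => q sim p R / q sim p (@finset.set0 F)))) ->
  forall (R : {set F}) (t : nat), indep sim R ->
    (\esum_(phi in Stab sim R t) (lam_seq lam phi)%:E
       <= (muS R * theta ^+ t)%:E)%E.
Proof.
move=> symm [[mu [[/andP [th0 th1] lam_ge0 mu_gt0 hf] ->]] |
  [Om [fl [rho [om [p [[[_ fl_n0] _ [om_gt0 _] [q_ge0 q0_gt0]
                         [hl [/andP [th0 th1] lam_le]]] ->]]]]]]] R t iR.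
  have mu_ge0 f := ltW (mu_gt0 f).
  apply: (esum_Stab_le (muS := mu_prod mu)) => //; try exact: ltW.
  - by rewrite /mu_prod big_set0.
  - by move=> T _; apply: mu_prod_ge0.
  - by move=> S _; apply: product_cluster_bound.
have lam_ge0 f : 0 <= lam f.
  have /set0Pn [s' _] := fl_n0 f.
  apply: le_trans (hl f s'); apply: sumr_ge0 => s /andP [_ rho_gt0].
  by rewrite divr_ge0 ?mulr_ge0 ?ltW.
apply: (esum_Stab_le (muS := fun S => q sim p S / q sim p set0)) => //;
  try exact: ltW.
- by rewrite divff // gt_eqF.
- by move=> T _; rewrite divr_ge0 ?q_ge0 ?ltW.
- move=> S iS; rewrite -mulr_suml !mulrA ler_pM2r ?invr_gt0 //.
  exact: shearer_cluster_bound.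
Qed.
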